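(* Let $R$ be a ring with unity and involution $*$, and let $a,b,c\in R$. Then $a$ is left dual $(b,c)$-core invertible if and only if $ab$ is left $(b^*,c)$-invertible. In this case, an element $x\in R$ is a left dual $(b,c)$-core inverse of $a$ if and only if $x$ is a left $(b^*,c)$-inverse of $ab$.
   Context: For $u,b,c\in R$, $u$ is left dual $(b,c)$-core invertible if there exists $x\in Rc$ with $bxub=b$ and $(xub)^*=xub$; such $x$ is a left dual $(b,c)$-core inverse of $u$. $u$ is left $(b,c)$-invertible if there exists $x\in Rc$ with $xub=b$ (equivalently $b\in Rcub$); such $x$ is a left $(b,c)$-inverse of $u$. *)

From mathcomp Require Import all_boot all_algebra.
Set Implicit Arguments. Unset Strict Implicit. Unset Printing Implicit Defensive.
Import GRing.Theory.
Local Open Scope ring_scope.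

Definition is_involution (R : pzRingType) (star : R -> R) : Prop :=
  [/\ forall x y, star (x + y) = star x + star y,
      forall x y, star (x * y) = star y * star x
    & forall x, star (star x) = x].

Definition in_Rc (R : pzRingType) (c x : R) : Prop := exists r : R, x = r * c.

Definition left_dual_bc_core_inverse (R : pzRingType) (star : R -> R)
  (u b c x : R) : Prop :=
  [/\ in_Rc c x, b * x * u * b = b & star (x * u * b) = x * u * b].

Definition left_dual_bc_core_invertible (R : pzRingType) (star : R -> R)
  (u b c : R) : Prop := exists x, left_dual_bc_core_inverse star u b c x.

Definition left_bc_inverse (R : pzRingType) (u b c x : R) : Prop :=
  in_Rc c x /\ x * u * b = b.

Definition left_bc_invertible (R : pzRingType) (u b c : R) : Prop :=
  exists x, left_bc_inverse u b c x.

From mathcomp Require Import all_boot all_algebra.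
Local Open Scope ring_scope.
Import GRing.Theory.

(* For p := x a b, the condition x (a b) b^* = b^* is the adjoint of b p^* = b.
   Given it, p p^* = p b^* (x a)^* = b^* (x a)^* = p^*; taking adjoints gives
   p p^* = p, so p is Hermitian and b p^* = b becomes b x a b = b. *)

Section Involution.

Variables (R : pzRingType) (star : R -> R).
Hypothesis star_involution : is_involution star.

Let starM : forall x y, star (x * y) = star y * star x.
Proof. by case: star_involution. Qed.

Let starK : forall x, star (star x) = x.
Proof. by case: star_involution. Qed.

Lemma mul_star_fixed (p b : R) : p * star b = star b <-> b * star p = b.
Proof. by split=> /(congr1 star); rewrite starM !starK. Qed.

Lemma hermitian_of_mul_star (p : R) : p * star p = star p -> star p = p.
Proof. by move=> pp; have := congr1 star pp; rewrite starM starK pp. Qed.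

Lemma left_dual_bc_core_inverseE (a b c x : R) :
  left_dual_bc_core_inverse star a b c x <-> left_bc_inverse (a * b) (star b) c x.
Proof.
rewrite /left_dual_bc_core_inverse /left_bc_inverse mulrA.
split=> [[xRc bpb p_herm] | [xRc pbb]].
  by split=> //; apply/mul_star_fixed; rewrite p_herm !mulrA.
have p_herm : star (x * a * b) = x * a * b.
  apply: hermitian_of_mul_star.
  by rewrite [star _]starM mulrA pbb -starM.
by move/mul_star_fixed: pbb; rewrite p_herm !mulrA.
Qed.

End Involution.

Theorem theorem3p11 (R : pzRingType) (star : R -> R) (a b c : R) :
  is_involution star ->
  (left_dual_bc_core_invertible star a b c <->
     left_bc_invertible (a * b) (star b) c) /\
  (forall x : R, left_dual_bc_core_inverse star a b c x <->
                 left_bc_inverse (a * b) (star b) c x).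
Proof.
move=> star_inv; have inverseE := @left_dual_bc_core_inverseE R star star_inv a b c.
by split=> //; split=> -[x /inverseE x_inv]; exists x.
Qed.
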